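(* Let $\Bbbk$ be a field of characteristic $2$, $G=\langle\sigma\rangle$ cyclic of order $4$ acting on $V=V_3$ with $\sigma x_1=x_1+x_2$, $\sigma x_2=x_2+x_3$, $\sigma x_3=x_3$ on the dual basis, $H=\langle\sigma^2\rangle$, and $A=\Bbbk[N^G(x_1),N^G_H(x_2),x_3]$ with $N^G(x_1)=\prod_{i=0}^3\sigma^i(x_1)$, $N^G_H(x_2)=x_2(x_2+x_3)$. Let $N^H(x_1)=x_1\sigma^2(x_1)=x_1(x_1+x_3)$. Then $K_2=\ker(\Delta^2:\Bbbk[V]\to\Bbbk[V])$ is a free $A$-module with basis $\{1,\ x_2,\ N^H(x_1),\ x_2N^H(x_1)\}$.
   Context: $\Delta=\sigma-\iota\in\Bbbk G$ acting on $\Bbbk[V]=\Bbbk[x_1,x_2,x_3]$. *)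

From HB Require Import structures.
From mathcomp Require Import all_boot all_order all_algebra.
From mathcomp Require Import mpoly.
Set Implicit Arguments. Unset Strict Implicit. Unset Printing Implicit Defensive.
Import GRing.Theory.
Local Open Scope ring_scope.

Section Defs.
Variable k : fieldType.

Definition x1 : {mpoly k[3]} := 'X_(@Ordinal 3 0 isT).
Definition x2 : {mpoly k[3]} := 'X_(@Ordinal 3 1 isT).
Definition x3 : {mpoly k[3]} := 'X_(@Ordinal 3 2 isT).

Definition sigma (p : {mpoly k[3]}) : {mpoly k[3]} :=
  p \mPo [tuple x1 + x2; x2 + x3; x3].

Definition Delta (p : {mpoly k[3]}) : {mpoly k[3]} := sigma p - p.

Definition K2 : pred {mpoly k[3]} := fun p => Delta (Delta p) == 0.

Definition NG_x1 : {mpoly k[3]} := \prod_(i < 4) iter i sigma x1.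
Definition NGH_x2 : {mpoly k[3]} := x2 * (x2 + x3).
Definition NH_x1 : {mpoly k[3]} := x1 * iter 2 sigma x1.

(* the generators of A = k[N^G(x1), N^G_H(x2), x3]; the element of A
   represented by q in k[y1,y2,y3] is q(N^G(x1), N^G_H(x2), x3) *)
Definition inA (q : {mpoly k[3]}) : {mpoly k[3]} :=
  q \mPo [tuple NG_x1; NGH_x2; x3].

Definition basisK2 : 4.-tuple {mpoly k[3]} :=
  [tuple 1; x2; NH_x1; x2 * NH_x1].

Definition Acomb (q : 4.-tuple {mpoly k[3]}) : {mpoly k[3]} :=
  \sum_(i < 4) inA (tnth q i) * tnth basisK2 i.
End Defs.

From Pilot Require Import Defs.
From HB Require Import structures.
From mathcomp Require Import all_boot all_order all_algebra.
From mathcomp Require Import mpoly ring.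
Set Implicit Arguments. Unset Strict Implicit. Unset Printing Implicit Defensive.
Import GRing.Theory.
Local Open Scope ring_scope.

(* In characteristic 2, Delta^2 = sigma^2 - 1 and sigma^2 = tau maps x1 to
   x1 + x3 and fixes x2, x3, so K_2 is the ring of tau-invariants.  Since x1
   is a root of T^2 + x3 T - N^H(x1) over k[N^H(x1), x2, x3], every polynomial
   is g0 + x1 g1 with g0, g1 in that subring, and tau-invariance forces
   x3 g1 = 0: K_2 = k[N^H(x1), x2, x3].  The same quadratic decomposition,
   applied to x2 (a root of T^2 + x3 T - N^G_H(x2)) and then to N^H(x1) (a root
   of T^2 + N^G_H(x2) T - N^G(x1)), yields the basis.  For uniqueness, two
   automorphisms fixing A separate the coefficients: x2 |-> x2 + x3 splits off
   those of x2 and x2 N^H(x1), and sigma, which maps N^H(x1) to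
   N^H(x1) + N^G_H(x2), splits off those of N^H(x1). *)

Section Substitution.
Variables (R : comNzRingType) (n m l : nat).

Lemma comp_mpolyA (p : {mpoly R[n]}) (t : n.-tuple {mpoly R[m]})
    (u : m.-tuple {mpoly R[l]}) :
  (p \mPo t) \mPo u = p \mPo [tuple tnth t i \mPo u | i < n].
Proof.
rewrite [p \mPo t]comp_mpolyEX raddf_sum /= [RHS]comp_mpolyEX; apply: eq_bigr => mm _.
rewrite comp_mpolyZ !comp_mpolyX rmorph_prod; congr (_ *: _).
by apply: eq_bigr => i _; rewrite rmorphXn tnth_mktuple.
Qed.

Lemma comp_mpoly_quad_decomp (t s : n.-tuple {mpoly R[m]}) (j j' : 'I_n) :
    j != j' -> tnth s j = tnth t j * (tnth t j + tnth t j') ->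
    (forall i, i != j -> tnth s i = tnth t i) ->
  forall p : {mpoly R[n]},
    exists h0 h1 : {mpoly R[n]}, p \mPo t = h0 \mPo s + tnth t j * (h1 \mPo s).
Proof.
move=> jj' sj si; have Xs i : 'X_i \mPo s = tnth s i by rewrite comp_mpolyXU -tnth_nth.
pose Q (p : {mpoly R[n]}) :=
  exists h0 h1 : {mpoly R[n]}, p \mPo t = h0 \mPo s + tnth t j * (h1 \mPo s).
have QX i q : Q q -> Q ('X_i * q).
  case=> h0 [h1 qE].
  have XqE : ('X_i * q) \mPo t = tnth t i * (h0 \mPo s + tnth t j * (h1 \mPo s)).
    by rewrite rmorphM /= qE comp_mpolyXU -tnth_nth.
  have [ij|ij] := eqVneq i j.
    exists ('X_j * h1), (h0 - 'X_j' * h1).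
    rewrite XqE ij rmorphM rmorphB rmorphM /= !Xs sj si 1?eq_sym //; ring.
  by exists ('X_i * h0), ('X_i * h1); rewrite XqE !rmorphM /= Xs si //; ring.
have QD q q' : Q q -> Q q' -> Q (q + q').
  case=> a [b qE] [c [d q'E]]; exists (a + c), (b + d).
  by rewrite rmorphD /= qE q'E !rmorphD /=; ring.
have QZ c q : Q q -> Q (c *: q).
  case=> a [b qE]; exists (c *: a), (c *: b).
  by rewrite !comp_mpolyZ qE scalerDr scalerAr.
have Q1 : Q 1 by exists 1, 0; rewrite !rmorph1 rmorph0 mulr0 addr0.
elim/mpolyind => [|c mm q _ _ Qq]; first by exists 0, 0; rewrite !rmorph0 mulr0 addr0.
apply: QD => //; apply: QZ; rewrite mpolyXE_id; elim/big_rec: _ => // i x _ Qx.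
by elim: (mm i) => [|e IH]; rewrite ?expr0 ?mul1r // exprS -mulrA; apply: QX.
Qed.

End Substitution.

Section Substitution3.
Variables (R : comNzRingType) (m : nat).

Lemma comp_mpolyA3 l (p : {mpoly R[3]}) (a b c : {mpoly R[m]})
    (u : m.-tuple {mpoly R[l]}) :
  (p \mPo [tuple a; b; c]) \mPo u = p \mPo [tuple a \mPo u; b \mPo u; c \mPo u].
Proof.
rewrite comp_mpolyA; congr (p \mPo _).
by apply: eq_from_tnth => i; rewrite tnth_mktuple; case: i => -[|[|[|]]].
Qed.

Lemma comp_mpoly3_fixed (p : {mpoly R[3]}) (a b c : {mpoly R[m]})
    (u : m.-tuple {mpoly R[m]}) :
    a \mPo u = a -> b \mPo u = b -> c \mPo u = c ->
  (p \mPo [tuple a; b; c]) \mPo u = p \mPo [tuple a; b; c].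
Proof. by move=> ua ub uc; rewrite comp_mpolyA3 ua ub uc. Qed.

End Substitution3.

Section Char2.
Variable k : fieldType.
Hypothesis k_char2 : 2 \in [pchar k].

Local Notation x1 := (x1 k).
Local Notation x2 := (x2 k).
Local Notation x3 := (x3 k).
Local Notation sigma := (@sigma k).
Local Notation inA := (@inA k).
Local Notation Acomb := (@Acomb k).
Local Notation N := (x1 * (x1 + x3)).
Local Notation B := (x2 * (x2 + x3)).
Local Notation tau := [tuple x1 + x3; x2; x3].
(* Not an element of G; it fixes A and moves x2 by x3. *)
Local Notation rho := [tuple x1; x2 + x3; x3].
Local Notation sig := [tuple x1 + x2; x2 + x3; x3].

(* [ring] cannot work modulo 2, so each characteristic-2 identity is proved by
   exhibiting the doubled term [r] that cancels. *)
Lemma drop_double (r a b : {mpoly k[3]}) : a = b + 2 * r -> a = b.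
Proof.
by rewrite -(rmorph_nat (@mpolyC 3 k)) (pcharf0 k_char2) rmorph0 mul0r addr0.
Qed.

Lemma sigma2E p : sigma (sigma p) = p \mPo tau.
Proof.
rewrite /sigma comp_mpolyA3 !rmorphD /= !comp_mpolyXU /=.
by congr (p \mPo [tuple _; _; _]); [apply: (@drop_double x2) | apply: (@drop_double x3)]; ring.
Qed.

Lemma K2_tauP f : K2 f <-> f \mPo tau = f.
Proof.
rewrite /K2; suff -> : Delta (Delta f) = f \mPo tau - f.
  by rewrite subr_eq0; split=> /eqP.
rewrite /Delta -sigma2E /sigma comp_mpolyB.
by apply: (@drop_double (f - (f \mPo sig))); ring.
Qed.

Lemma NH_x1E : NH_x1 k = N.
Proof. by rewrite /NH_x1 /= sigma2E comp_mpolyXU. Qed.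

Lemma NG_x1E : NG_x1 k = N * (N + B).
Proof.
rewrite /NG_x1 !big_ord_recr big_ord0 /= !sigma2E /sigma !comp_mpolyXU /=.
by rewrite !rmorphD /= !comp_mpolyXU /=; apply: (@drop_double (N * x1 * x2)); ring.
Qed.

Lemma sig_N : N \mPo sig = N + B.
Proof.
rewrite rmorphM rmorphD /= !comp_mpolyXU /=.
by apply: (@drop_double (x1 * x2)); ring.
Qed.

Lemma sig_B : B \mPo sig = B.
Proof.
rewrite rmorphM rmorphD /= !comp_mpolyXU /=.
by apply: (@drop_double ((x2 + x3) * x3)); ring.
Qed.

Lemma rho_B : B \mPo rho = B.
Proof.
rewrite rmorphM rmorphD /= !comp_mpolyXU /=.
by apply: (@drop_double ((x2 + x3) * x3)); ring.
Qed.

Lemma tau_N : N \mPo tau = N.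
Proof.
rewrite rmorphM rmorphD /= !comp_mpolyXU /=.
by apply: (@drop_double ((x1 + x3) * x3)); ring.
Qed.

Lemma inA_sig q : inA q \mPo sig = inA q.
Proof.
rewrite /inA NG_x1E; apply: comp_mpoly3_fixed; last by rewrite comp_mpolyXU.
  rewrite rmorphM rmorphD /= sig_N sig_B.
  by apply: (@drop_double ((N + B) * B)); ring.
exact: sig_B.
Qed.

Lemma rho_N : N \mPo rho = N.
Proof. by rewrite rmorphM rmorphD /= !comp_mpolyXU. Qed.

Lemma inA_rho q : inA q \mPo rho = inA q.
Proof.
rewrite /inA NG_x1E; apply: comp_mpoly3_fixed; last by rewrite comp_mpolyXU.
  by rewrite rmorphM rmorphD /= rho_N rho_B.
exact: rho_B.
Qed.

Lemma x3_neq0 : x3 != 0.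
Proof.
apply/eqP => /(congr1 (meval (fun=> 1 : k))); rewrite mevalXU meval0.
exact/eqP/oner_neq0.
Qed.

Lemma NGH_x2_neq0 : B != 0.
Proof.
apply/eqP => /(congr1 (meval (fun i : 'I_3 => if i == 2%N :> nat then 0 else 1 : k))).
rewrite rmorphM rmorphD /= !mevalXU meval0 /= mul1r addr0.
exact/eqP/oner_neq0.
Qed.

Lemma tau_fixed_comp_Nx2x3 f : f \mPo tau = f -> exists g, f = g \mPo [tuple N; x2; x3].
Proof.
move=> f_tau.
have other : forall i : 'I_3, i != 0 -> tnth [tuple N; x2; x3] i = tnth [tuple x1; x2; x3] i.
  by case=> -[|[|[|]]] ? //=.
have [g0 [g1 fE]] := @comp_mpoly_quad_decomp _ _ _ [tuple x1; x2; x3] [tuple N; x2; x3]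
  0 2 isT erefl other f.
have id3 : [tuple x1; x2; x3] = [tuple 'X_i | i < 3].
  apply: eq_from_tnth => i; rewrite tnth_mktuple.
  by case: i => -[|[|[|//]]] i3; rewrite (bool_irrelevance i3 isT).
rewrite {1}id3 comp_mpoly_id /= in fE; rewrite fE; exists g0.
have s_tau p : (p \mPo [tuple N; x2; x3]) \mPo tau = p \mPo [tuple N; x2; x3].
  by apply: comp_mpoly3_fixed; [exact: tau_N | exact: comp_mpolyXU..].
move: f_tau; rewrite fE rmorphD rmorphM /= !s_tau comp_mpolyXU /=.
set G0 := g0 \mPo _; set G1 := g1 \mPo _ => f_tau.
have : x3 * G1 = (G0 + (x1 + x3) * G1) - (G0 + x1 * G1) by ring.
rewrite f_tau subrr => /eqP; rewrite mulf_eq0 (negbTE x3_neq0) => /eqP ->.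
by rewrite mulr0 addr0.
Qed.

Lemma comp_NBx3_span g : exists a c, g \mPo [tuple N; B; x3] = inA a + inA c * N.
Proof.
have other : forall i : 'I_3, i != 0 ->
    tnth [tuple N * (N + B); B; x3] i = tnth [tuple N; B; x3] i.
  by case=> -[|[|[|]]] ? //=.
have [a [c gE]] := @comp_mpoly_quad_decomp _ _ _ [tuple N; B; x3]
  [tuple N * (N + B); B; x3] 0 1 isT erefl other g.
by exists a, c; rewrite gE /inA /NGH_x2 NG_x1E /= [_ * N]mulrC.
Qed.

Lemma AcombE q :
  Acomb q = inA q`_0 + inA q`_1 * x2 + inA q`_2 * N + inA q`_3 * (x2 * N).
Proof.
by rewrite /Acomb !big_ord_recr big_ord0 /= !(tnth_nth 0) /= NH_x1E add0r mulr1.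
Qed.

Lemma comp_Nx2x3_span g : exists q, g \mPo [tuple N; x2; x3] = Acomb q.
Proof.
have other : forall i : 'I_3, i != 1 -> tnth [tuple N; B; x3] i = tnth [tuple N; x2; x3] i.
  by case=> -[|[|[|]]] ? //=.
have [h0 [h1 gE]] := @comp_mpoly_quad_decomp _ _ _ [tuple N; x2; x3]
  [tuple N; B; x3] 1 2 isT erefl other g.
have [a [c h0E]] := comp_NBx3_span h0; have [b [d h1E]] := comp_NBx3_span h1.
by exists [tuple a; b; c; d]; rewrite AcombE gE h0E h1E (tnth_nth 0) /=; ring.
Qed.

Lemma Acomb_tau q : Acomb q \mPo tau = Acomb q.
Proof.
have inA_tau p : inA p \mPo tau = inA p by rewrite -sigma2E /sigma !inA_sig.
rewrite AcombE !comp_mpolyD ![(inA _ * _) \mPo _]rmorphM /= [(x2 * N) \mPo _]rmorphM /=.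
by rewrite !inA_tau tau_N comp_mpolyXU.
Qed.

Lemma sig_fixed_indep a c :
  a \mPo sig = a -> c \mPo sig = c -> a + c * N = 0 -> a = 0 /\ c = 0.
Proof.
move=> a_sig c_sig E.
have E' := congr1 (comp_mpoly sig) E.
rewrite comp_mpolyD rmorphM /= a_sig c_sig sig_N comp_mpoly0 in E'.
have : B * c = 0.
  have -> : B * c = (a + c * (N + B)) - (a + c * N) by ring.
  by rewrite E E' subrr.
move/eqP; rewrite mulf_eq0 (negbTE NGH_x2_neq0) => /eqP c0.
by move: E; rewrite c0 mul0r addr0.
Qed.

Lemma Acomb_eq0 q : Acomb q = 0 -> forall i, inA (tnth q i) = 0.
Proof.
rewrite AcombE => E.
have E' := congr1 (comp_mpoly rho) E.
rewrite !comp_mpolyD ![(inA _ * _) \mPo _]rmorphM /= [(x2 * N) \mPo _]rmorphM /= in E'.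
rewrite !inA_rho rho_N comp_mpolyXU /= comp_mpoly0 in E'.
have odd : inA q`_1 + inA q`_3 * N = 0.
  have : x3 * (inA q`_1 + inA q`_3 * N) = 0.
    have -> : x3 * (inA q`_1 + inA q`_3 * N) =
      (inA q`_0 + inA q`_1 * (x2 + x3) + inA q`_2 * N + inA q`_3 * ((x2 + x3) * N))
      - (inA q`_0 + inA q`_1 * x2 + inA q`_2 * N + inA q`_3 * (x2 * N)) by ring.
    by rewrite E E' subrr.
  by move/eqP; rewrite mulf_eq0 (negbTE x3_neq0) => /eqP.
have even : inA q`_0 + inA q`_2 * N = 0.
  have -> : inA q`_0 + inA q`_2 * N =
    (inA q`_0 + inA q`_1 * x2 + inA q`_2 * N + inA q`_3 * (x2 * N))
    - x2 * (inA q`_1 + inA q`_3 * N) by ring.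
  by rewrite E odd mulr0 subrr.
have [q0 q2] := sig_fixed_indep (inA_sig _) (inA_sig _) even.
have [q1 q3] := sig_fixed_indep (inA_sig _) (inA_sig _) odd.
by case=> -[|[|[|[|]]]] ? //; rewrite (tnth_nth 0).
Qed.

Lemma AcombB q q' : Acomb [tuple tnth q i - tnth q' i | i < 4] = Acomb q - Acomb q'.
Proof.
rewrite /Acomb -sumrB; apply: eq_bigr => i _.
by rewrite tnth_mktuple /Defs.inA comp_mpolyB mulrBl.
Qed.

End Char2.

Theorem proposition4p17 (k : fieldType) (hchar : 2 \in [pchar k]) :
  (forall f : {mpoly k[3]}, K2 f <-> exists q : 4.-tuple {mpoly k[3]}, f = Acomb q)
  /\
  (forall q q' : 4.-tuple {mpoly k[3]},
      Acomb q = Acomb q' -> forall i : 'I_4, inA (tnth q i) = inA (tnth q' i)).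
Proof.
split=> [f | q q' qq' i].
  rewrite K2_tauP //; split=> [/(tau_fixed_comp_Nx2x3 hchar) [g ->] | [q ->]].
    exact: comp_Nx2x3_span.
  exact: Acomb_tau.
apply/eqP; rewrite -subr_eq0.
have := Acomb_eq0 hchar (q := [tuple tnth q j - tnth q' j | j < 4]).
rewrite AcombB qq' subrr => /(_ erefl i).
by rewrite tnth_mktuple /inA comp_mpolyB => ->.
Qed.
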